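(* Let $L_5$ be the $5$-element linearly ordered set. There are infinitely many pairwise non-equivalent monotone games over $L_5$.
   Context: Games over a poset $A$ of atoms are defined inductively: for each $a\in A$, $[a]$ is a game (atomic); whenever $L,R$ are non-empty sets of games, $\{L\mid R\}$ is a game (composite), with left options the elements of $L$ and right options the elements of $R$. A position of $G$ is $G$ itself, an option of $G$, an option of an option, etc. Relations $\le$ and $\lhd$ on games are defined by mutual recursion: $G\le H$ iff (1) every left option $G^L$ of $G$ satisfies $G^L\lhd H$, (2) every right option $H^R$ of $H$ satisfies $G\lhd H^R$, and (3) if $G$ or $H$ is atomic then $G\lhd H$. $G\lhd H$ iff (1) some right option $G^R$ of $G$ satisfies $G^R\le H$, or (2) some left option $H^L$ of $H$ satisfies $G\le H^L$, or (3) $G=[a]$, $H=[b]$ are atomic with $a\le b$ in $A$. Games $G,H$ are equivalent if $G\le H$ and $H\le G$. A game $G$ is locally monotone if every left option satisfies $G\le G^L$ and every right option satisfies $G^R\le G$; it is monotone if every position of $G$ is locally monotone. *)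

From HB Require Import structures.
From mathcomp Require Import all_boot all_order.
From Stdlib Require Import List.
Set Implicit Arguments. Unset Strict Implicit. Unset Printing Implicit Defensive.
Import Order.TTheory.
Local Open Scope order_scope.

Section Games.
Context {disp : Order.disp_t} (A : porderType disp).

Inductive game : Type :=
| Atom : A -> game
| Comp : list game -> list game -> game.

Definition lefts (G : game) : list game :=
  match G with Atom _ => nil | Comp L _ => L end.
Definition rights (G : game) : list game :=
  match G with Atom _ => nil | Comp _ R => R end.
Definition is_atomic (G : game) : Prop :=
  match G with Atom _ => True | Comp _ _ => False end.

Inductive valid_game : game -> Prop :=
| valid_atom a : valid_game (Atom a)
| valid_comp L R : L <> nil -> R <> nil ->
    (forall X, In X L -> valid_game X) ->
    (forall X, In X R -> valid_game X) -> valid_game (Comp L R).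

(* The relations <= and <| (defined by well-founded mutual recursion in the
   paper; here as the corresponding mutual inductive relations, which agree
   since the recursion is well-founded). *)
Inductive game_le : game -> game -> Prop :=
| game_le_intro G H :
    (forall GL, In GL (lefts G) -> game_lf GL H) ->
    (forall HR, In HR (rights H) -> game_lf G HR) ->
    (is_atomic G \/ is_atomic H -> game_lf G H) ->
    game_le G H
with game_lf : game -> game -> Prop :=
| game_lf_right G H GR : In GR (rights G) -> game_le GR H -> game_lf G H
| game_lf_left G H HL : In HL (lefts H) -> game_le G HL -> game_lf G H
| game_lf_atom (a b : A) : a <= b -> game_lf (Atom a) (Atom b).

Definition game_equiv (G H : game) : Prop := game_le G H /\ game_le H G.

Inductive position : game -> game -> Prop :=
| pos_refl G : position G G
| pos_left G X P : In X (lefts G) -> position X P -> position G P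
| pos_right G X P : In X (rights G) -> position X P -> position G P.

Definition locally_monotone (G : game) : Prop :=
  (forall GL, In GL (lefts G) -> game_le G GL) /\
  (forall GR, In GR (rights G) -> game_le GR G).

Definition monotone (G : game) : Prop :=
  forall P, position G P -> locally_monotone P.

End Games.

Definition L5 := 'I_5.

(* Let P = {[4] | [2]}, and define G_n = {P | X_n}, U_n = {G_n | [0]},
   R_n = {[3] | U_n} where X_0 = [1] and X_(n+1) = {R_n | [0]}.

   Monotonicity: [0] lies below every game, X_n and U_n lie below [1] and G_n
   below [2]; these bounds give G <= G^L and G^R <= G at every position.

   Non-equivalence: for i < j we show G_i </= G_j.  No G_i lies below R_k,
   since P <| R_k would need [4] <= [3] or [2] <| X_k.  Hence G_i <= G_j
   forces X_i <= X_j; unwinding the definitions reduces X_(i+1) <= X_(j+1)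
   to X_i <= X_(j+1) or U_i <= U_j, and U_i <= U_j to X_i <= U_j or
   G_i <= G_j.  A simultaneous induction on i thus ends at X_0 = [1] lying
   below a game whose right option is [0], which fails. *)

From Stdlib Require Import List Setoid.
From mathcomp Require Import all_boot all_order.
Import Order.TTheory.

Notation comp1 l r := (Comp (l :: nil) (r :: nil)).

Section GameRelations.
Context {disp : Order.disp_t} {A : porderType disp}.
Implicit Types (G H l r : game A) (a b : A).
Local Open Scope order_scope.

Lemma game_leP G H : game_le G H <->
  [/\ forall GL, In GL (lefts G) -> game_lf GL H,
      forall HR, In HR (rights H) -> game_lf G HR
    & is_atomic G \/ is_atomic H -> game_lf G H].
Proof. by split=> [le_GH | [] /game_le_intro//]; inversion le_GH. Qed.

Lemma game_lfP G H : game_lf G H <->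
  [\/ exists2 GR, In GR (rights G) & game_le GR H,
      exists2 HL, In HL (lefts H) & game_le G HL
    | exists a b, [/\ G = Atom a, H = Atom b & a <= b]].
Proof.
split=> [lf_GH | [[GR] | [HL] | [a [b [-> -> ab]]]]].
- inversion lf_GH.
  + by apply: Or31; exists GR.
  + by apply: Or32; exists HL.
  + by apply: Or33; exists a, b.
- exact: game_lf_right.
- exact: game_lf_left.
- exact: game_lf_atom.
Qed.

Lemma comp1_lf_of_le l r H : game_le r H -> game_lf (comp1 l r) H.
Proof. by apply: game_lf_right; left. Qed.

Lemma lf_comp1_of_le G l r : game_le G l -> game_lf G (comp1 l r).
Proof. by apply: game_lf_left; left. Qed.

Lemma game_lf_atoms a b : game_lf (Atom a) (Atom b) <-> a <= b.
Proof.
rewrite game_lfP; split=> [[[]|[]|[? [? [[->] [->]]]]] // | ab].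
by apply: Or33; exists a, b.
Qed.

Lemma game_le_atoms a b : game_le (Atom a) (Atom b) <-> a <= b.
Proof.
rewrite game_leP -game_lf_atoms.
by split=> [[_ _ lf_ab] | lf_ab]; [apply: lf_ab; left | split].
Qed.

Lemma game_lf_atom_comp1 a l r : game_lf (Atom a) (comp1 l r) <-> game_le (Atom a) l.
Proof.
rewrite game_lfP; split=> [[[]|[? [<-|[]]]|[? [? [_ ]]]] // | le_al].
by apply: Or32; exists l; first left.
Qed.

Lemma game_lf_comp1_atom l r b : game_lf (comp1 l r) (Atom b) <-> game_le r (Atom b).
Proof.
rewrite game_lfP; split=> [[[? [<-|[]]]|[]|[? [? []]]] // | le_rb].
by apply: Or31; exists r; first left.
Qed.

Lemma game_lf_comp1 l r l' r' :
  game_lf (comp1 l r) (comp1 l' r') <-> game_le r (comp1 l' r') \/ game_le (comp1 l r) l'.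
Proof.
rewrite game_lfP; split=> [[[? [<-|[]]]|[? [<-|[]]]|[? [? []]]] | [le_r | le_l']].
- by left.
- by right.
- by [].
- by apply: Or31; exists r; first left.
- by apply: Or32; exists l'; first left.
Qed.

Lemma game_le_atom_comp1 a l r :
  game_le (Atom a) (comp1 l r) <-> game_lf (Atom a) r /\ game_le (Atom a) l.
Proof.
rewrite game_leP -game_lf_atom_comp1; split=> [[_ lf_ar lf_al] | [lf_ar lf_al]].
- by split; [apply: lf_ar; left | apply: lf_al; left].
- by split=> // HR [<-|[]].
Qed.

Lemma game_le_comp1_atom l r b :
  game_le (comp1 l r) (Atom b) <-> game_lf l (Atom b) /\ game_le r (Atom b).
Proof.
rewrite game_leP -game_lf_comp1_atom; split=> [[lf_lb _ lf_rb] | [lf_lb lf_rb]].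
- by split; [apply: lf_lb; left | apply: lf_rb; right].
- by split=> // GL [<-|[]].
Qed.

Lemma game_le_comp1 l r l' r' :
  game_le (comp1 l r) (comp1 l' r') <-> game_lf l (comp1 l' r') /\ game_lf (comp1 l r) r'.
Proof.
rewrite game_leP; split=> [[lf_l lf_r' _] | [lf_l lf_r']].
- by split; [apply: lf_l | apply: lf_r']; left.
- by split=> [GL [<-|[]] | HR [<-|[]] | [[]|[]]].
Qed.

Lemma bottom_atom_le a H : (forall b, a <= b) -> valid_game H -> game_le (Atom a) H.
Proof.
move=> a_min; elim=> [b | L R L0 _ _ IHL _ IHR]; first exact/game_le_atoms.
apply/game_leP; split=> //= [HR /IHR/game_leP[_ _ lf_aHR] | _]; first by apply: lf_aHR; left.
case: L L0 IHL => // l L _ IHL.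
by apply: (game_lf_left (HL := l)); [left | apply: IHL; left].
Qed.

Lemma valid_comp1 l r : valid_game l -> valid_game r -> valid_game (comp1 l r).
Proof. by constructor=> // X [<-|[]]. Qed.

Lemma monotone_intro G : locally_monotone G ->
  (forall X, In X (lefts G) -> monotone X) -> (forall X, In X (rights G) -> monotone X) ->
  monotone G.
Proof.
move=> mono_G mono_L mono_R P.
inversion 1 as [| ? X ? in_X pos_P | ? X ? in_X pos_P]; subst => //.
- exact: (mono_L X).
- exact: (mono_R X).
Qed.

Lemma monotone_atom a : monotone (Atom a).
Proof. by apply: monotone_intro. Qed.

Lemma monotone_comp1 l r : game_le (comp1 l r) l -> game_le r (comp1 l r) ->
  monotone l -> monotone r -> monotone (comp1 l r).
Proof.
move=> le_l le_r mono_l mono_r.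
by apply: monotone_intro => [| X [<-|[]] | X [<-|[]]] //; split=> X [<-|[]].
Qed.

End GameRelations.

Local Notation "[ k ]" := (Atom (Ordinal (isT : (k < 5)%N)) : game L5).

Definition P : game L5 := comp1 [4] [2].

Definition chain_step (x : game L5) : game L5 :=
  comp1 (comp1 [3] (comp1 (comp1 P x) [0])) [0].
Definition X (n : nat) : game L5 := iter n chain_step [1].
Definition G (n : nat) : game L5 := comp1 P (X n).
Definition U (n : nat) : game L5 := comp1 (G n) [0].
Definition R (n : nat) : game L5 := comp1 [3] (U n).

Lemma X_succ n : X n.+1 = comp1 (R n) [0]. Proof. by []. Qed.

Lemma valid_X n : valid_game (X n).
Proof.
elim: n => [|n IH]; first exact: valid_atom.
by repeat first [exact: IH | apply: valid_atom | apply: valid_comp1].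
Qed.

Lemma valid_G n : valid_game (G n).
Proof. by repeat first [exact: valid_X | apply: valid_atom | apply: valid_comp1]. Qed.

Lemma valid_U n : valid_game (U n).
Proof. by repeat first [exact: valid_X | apply: valid_atom | apply: valid_comp1]. Qed.

Lemma atom0_le H : valid_game H -> game_le [0] H.
Proof. by apply: bottom_atom_le => b; rewrite leEord. Qed.

Lemma atom0_le_atom b : game_le [0] (Atom b).
Proof. exact/atom0_le/valid_atom. Qed.

Lemma U_le_atom_of_X n b : game_le (X n) (Atom b) -> game_le (U n) (Atom b).
Proof.
rewrite game_le_comp1_atom game_lf_comp1_atom => le_Xb.
by split=> //; apply: atom0_le_atom.
Qed.

Lemma X_le_atom n (b : L5) : (1 <= b)%N -> game_le (X n) (Atom b).
Proof.
move=> b_ge1; elim: n => [|n IH]; first by rewrite game_le_atoms leEord.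
rewrite X_succ game_le_comp1_atom game_lf_comp1_atom.
by split; [apply: U_le_atom_of_X | apply: atom0_le_atom].
Qed.

Lemma U_le_atom n (b : L5) : (1 <= b)%N -> game_le (U n) (Atom b).
Proof. by move/(X_le_atom n)/U_le_atom_of_X. Qed.

Lemma G_le_atom n (b : L5) : (2 <= b)%N -> game_le (G n) (Atom b).
Proof.
move=> b_ge2; rewrite game_le_comp1_atom game_lf_comp1_atom game_le_atoms leEord.
by split=> //; apply: X_le_atom (ltnW b_ge2).
Qed.

Lemma P_le_4 : game_le P [4].
Proof. by rewrite game_le_comp1_atom game_lf_atoms !game_le_atoms. Qed.

Lemma atom2_le_P : game_le [2] P.
Proof. by rewrite game_le_atom_comp1 game_lf_atoms game_le_atoms. Qed.

Lemma G_le_P n : game_le (G n) P.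
Proof.
rewrite game_le_comp1 game_lf_comp1_atom; split; last exact: X_le_atom.
by apply: lf_comp1_of_le; apply: P_le_4.
Qed.

Lemma R_le_P n : game_le (R n) P.
Proof.
rewrite game_le_comp1 game_lf_atom_comp1 game_le_atoms game_lf_comp1_atom.
by split=> //; apply: U_le_atom.
Qed.

Lemma X_le_G n : game_le (X n) (G n).
Proof.
case: n => [|n].
  rewrite game_le_atom_comp1 game_lf_atoms game_le_atom_comp1 game_lf_atoms.
  by rewrite game_le_atoms.
rewrite game_le_comp1; split; first by apply/lf_comp1_of_le/R_le_P.
by apply/comp1_lf_of_le/atom0_le/valid_X.
Qed.

Lemma U_le_G n : game_le (U n) (G n).
Proof.
rewrite game_le_comp1; split; first by apply/comp1_lf_of_le/X_le_G.
by apply/comp1_lf_of_le/atom0_le/valid_X.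
Qed.

Lemma R_le_3 n : game_le (R n) [3].
Proof. by rewrite game_le_comp1_atom game_lf_atoms; split=> //; apply: U_le_atom. Qed.

Lemma U_le_R n : game_le (U n) (R n).
Proof.
rewrite game_le_comp1; split; first by apply/lf_comp1_of_le/G_le_atom.
by apply/comp1_lf_of_le/atom0_le/valid_U.
Qed.

Lemma X_succ_le_R n : game_le (X n.+1) (R n).
Proof.
rewrite X_succ game_le_comp1; split; first by apply/comp1_lf_of_le/U_le_R.
by apply/comp1_lf_of_le/atom0_le/valid_U.
Qed.

Lemma monotone_P : monotone P.
Proof. by apply: monotone_comp1 P_le_4 atom2_le_P _ _; apply: monotone_atom. Qed.

Lemma monotone_G n : monotone (G n).
Proof.
elim: n => [|n IH]; apply: monotone_comp1 (G_le_P _) (X_le_G _) monotone_P _.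
  exact: monotone_atom.
have mono_U : monotone (U n).
  by apply: monotone_comp1 (U_le_G n) _ IH (monotone_atom _); apply/atom0_le/valid_U.
have mono_R : monotone (R n).
  exact: monotone_comp1 (R_le_3 n) (U_le_R n) (monotone_atom _) mono_U.
rewrite X_succ; apply: monotone_comp1 (X_succ_le_R n) _ mono_R (monotone_atom _).
by rewrite -X_succ; apply/atom0_le/valid_X.
Qed.

Lemma not_lf_2_X k : ~ game_lf [2] (X k).
Proof.
elim: k => [|k IH]; first by rewrite game_lf_atoms.
rewrite X_succ game_lf_atom_comp1 game_le_atom_comp1 game_lf_atom_comp1 game_le_atom_comp1.
by case=> [[/IH]].
Qed.

Lemma not_P_lf_R k : ~ game_lf P (R k).
Proof.
rewrite game_lf_comp1 game_le_atom_comp1 game_lf_atom_comp1 game_le_atom_comp1 game_le_comp1_atom.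
by rewrite game_lf_atoms => -[[[/not_lf_2_X]]|[]].
Qed.

Lemma not_G_le_R i k : ~ game_le (G i) (R k).
Proof. by rewrite game_le_comp1 => -[/not_P_lf_R]. Qed.

Lemma not_R_le_G i k : ~ game_le (R i) (G k).
Proof. by rewrite game_le_comp1 game_lf_atom_comp1 game_le_atom_comp1 game_lf_atoms => -[[]]. Qed.

Lemma not_X0_le_U j : ~ game_le (X 0) (U j).
Proof. by rewrite game_le_atom_comp1 game_lf_atoms => -[]. Qed.

Lemma not_X0_le_X_succ j : ~ game_le (X 0) (X j.+1).
Proof. by rewrite X_succ game_le_atom_comp1 game_lf_atoms => -[]. Qed.

Lemma G_lf_X_succ i j : game_lf (G i) (X j.+1) -> game_le (X i) (X j.+1).
Proof. by rewrite {2}X_succ game_lf_comp1 -X_succ => -[//|/not_G_le_R]. Qed.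

Lemma G_le_G_succ i j : game_le (G i) (G j.+1) -> game_le (X i) (X j.+1).
Proof. by rewrite game_le_comp1 => -[_ /G_lf_X_succ]. Qed.

Lemma U_le_U i j : game_le (U i) (U j) -> game_le (X i) (U j) \/ game_le (G i) (G j).
Proof. by rewrite game_le_comp1 game_lf_comp1 => -[]. Qed.

Lemma X_succ_le_U i j : game_le (X i.+1) (U j) -> game_le (U i) (U j).
Proof. by rewrite X_succ game_le_comp1 game_lf_comp1 => -[[//|/not_R_le_G]]. Qed.

Lemma X_succ_le_X_succ i j :
  game_le (X i.+1) (X j.+1) -> game_le (X i) (X j.+1) \/ game_le (U i) (U j).
Proof.
rewrite !X_succ game_le_comp1 game_lf_comp1 => -[[le_UX | le_RR] _].
- by left; move: le_UX; rewrite game_le_comp1 -X_succ => -[/G_lf_X_succ].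
- by move: le_RR; rewrite game_le_comp1 game_lf_comp1 => -[_ [|/not_R_le_G]]; [right|].
Qed.

Lemma not_le_X_U_of_lt i j :
  (i < j)%N -> [/\ ~ game_le (X i) (X j), ~ game_le (X i) (U j) & ~ game_le (U i) (U j)].
Proof.
elim: i j => [|i IH] [|j] // lt_ij.
  have not_X0_le_XSj := not_X0_le_X_succ j.
  have not_X0_le_USj := not_X0_le_U j.+1.
  by split=> // /U_le_U[|/G_le_G_succ].
have [_ _ not_Ui_le_Uj] := IH j lt_ij.
have [not_Xi_le_Xj _ not_Ui_le_USj] := IH j.+1 (ltnW lt_ij).
have not_XSi_le_XSj : ~ game_le (X i.+1) (X j.+1) by case/X_succ_le_X_succ.
have not_XSi_le_USj : ~ game_le (X i.+1) (U j.+1) by move/X_succ_le_U.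
by split=> // /U_le_U[|/G_le_G_succ].
Qed.

Lemma not_le_G_of_lt i j : (i < j)%N -> ~ game_le (G i) (G j).
Proof. by case: j => // j /not_le_X_U_of_lt[not_le_X _ _] /G_le_G_succ. Qed.

Theorem corollary3p5 :
  exists f : nat -> game L5,
    (forall n, valid_game (f n) /\ monotone (f n)) /\
    (forall m n, m <> n -> ~ game_equiv (f m) (f n)).
Proof.
exists G; split=> [n | m n neq_mn [le_mn le_nm]].
  by split; [apply: valid_G | apply: monotone_G].
have [lt_mn | lt_nm | eq_mn] := ltngtP m n.
- exact: not_le_G_of_lt lt_mn le_mn.
- exact: not_le_G_of_lt lt_nm le_nm.
- exact: neq_mn eq_mn.
Qed.
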